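(* Let $\mathbf B=(\mathbf b_1,\dots,\mathbf b_n)\in\mathbb Q^{d\times n}$ be a basis of a lattice $\mathcal{L}$, let $k\in[n]$ and $\alpha>\sqrt n$ be such that $\|\tilde{\mathbf b}_i\|\le\|\tilde{\mathbf b}_j\|/\alpha$ for all $i\le k<j$. If $\mathcal{L}'\subseteq\mathcal{L}$ is a primitive sublattice of rank $\ell\ge k$ with \[ \det(\mathcal{L}')<\Big(\frac{\alpha}{\sqrt{n\,\delta_{\ell,k}}}\prod_{i=1}^k\|\tilde{\mathbf b}_i\|\Big)^{\ell/k}, \] then $\mathbf b_1,\dots,\mathbf b_k\in\mathcal{L}'$.
   Context: Gram–Schmidt orthogonalization: $\tilde{\mathbf b}_1=\mathbf b_1$, $\tilde{\mathbf b}_i=\Pi_{\{\mathbf b_1,\dots,\mathbf b_{i-1}\}^\perp}(\mathbf b_i)$. A sublattice $\mathcal{M}\subseteq\mathcal{L}$ is primitive if $\mathcal{M}=\mathcal{L}\cap\mathrm{span}(\mathcal{M})$. Rankin's constant: for $1\le k\le m$, $\delta_{m,k}:=\sup_{\mathcal{M}}\min_{\mathcal{M}'\subseteq\mathcal{M},\ \mathrm{rank}(\mathcal{M}')=k}\det(\mathcal{M}')^2/\det(\mathcal{M})^{2k/m}$, the supremum over all lattices $\mathcal{M}$ of rank $m$ (so $\delta_{m,m}=1$). *)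

From HB Require Import structures.
From mathcomp Require Import all_boot all_order all_algebra.
From mathcomp Require Import classical_sets reals exp.
Set Implicit Arguments. Unset Strict Implicit. Unset Printing Implicit Defensive.
Import Order.TTheory GRing.Theory Num.Theory.
Local Open Scope ring_scope.
Local Open Scope classical_set_scope.

(* Vectors of R^d are row vectors 'rV[R]_d; a family of n vectors is the
   matrix 'M[R]_(n,d) whose i-th row is the i-th vector. *)

Section Lattices.
Variable R : realType.

Definition dotv (d : nat) (u v : 'rV[R]_d) : R := (u *m v^T) 0 0.
Definition normv (d : nat) (u : 'rV[R]_d) : R := Num.sqrt (dotv u u).

Definition lat (n d : nat) (B : 'M[R]_(n, d)) : set 'rV[R]_d :=
  [set v | exists z : 'I_n -> int, v = \sum_(i < n) (z i)%:~R *: row i B].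

Definition rspan (n d : nat) (B : 'M[R]_(n, d)) : set 'rV[R]_d :=
  [set v | exists c : 'I_n -> R, v = \sum_(i < n) c i *: row i B].

Definition detL (n d : nat) (B : 'M[R]_(n, d)) : R := Num.sqrt (\det (B *m B^T)).

(* Gram-Schmidt vector b~_i = projection of b_i onto {b_1,...,b_(i-1)}^perp :
   the (unique) w with b_i - w in span(b_j, j < i) and w orthogonal to
   every b_j, j < i. *)
Definition gso (n d : nat) (B : 'M[R]_(n, d)) (i : 'I_n) : 'rV[R]_d :=
  xget 0 [set w | (exists c : 'I_n -> R,
                      row i B - w = \sum_(j < n | (j < i)%N) c j *: row j B)
                  /\ (forall j : 'I_n, (j < i)%N -> dotv w (row j B) = 0)].

Definition rankin (m k : nat) : R :=
  sup [set x : R | exists (d : nat) (M : 'M[R]_(m, d)), row_free M /\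
        x = inf [set y : R | exists C : 'M[R]_(k, d), row_free C /\
                   (forall i : 'I_k, lat M (row i C)) /\
                   y = detL C ^+ 2 / powR (detL M) (2 * k%:R / m%:R)]].

End Lattices.

(* Write a rank-k sublattice M of L' as M = Z B with Z an integer matrix.
   Unimodular row operations bring Z to echelon form; if the pivot columns are
   p_1, ..., p_k then det(M)^2 >= prod_r |b~_(p_r)|^2.  If some row of Z uses a
   column beyond k, some pivot lies beyond k and the Gram-Schmidt gap makes this
   product at least alpha^2 prod_(i <= k) |b~_i|^2.  By the definition of
   Rankin's constant and the bound on det(L'), L' has a rank-k sublattice M with
   det(M)^2 <= delta_(l,k) det(L')^(2k/l) < alpha^2 prod_(i <= k) |b~_i|^2, so
   M spans the same space as b_1, ..., b_k, and primitivity puts the b_i in L'. *)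

From HB Require Import structures.
From mathcomp Require Import all_boot all_order all_algebra.
From mathcomp Require Import boolp reals exp.
From mathcomp Require Import zify ring.
Import Order.TTheory GRing.Theory Num.Theory.
Local Open Scope ring_scope.

Set Implicit Arguments.
Unset Strict Implicit.
Unset Printing Implicit Defensive.

Section InnerProduct.
Variables (R : realType) (d : nat).
Implicit Types u v w : 'rV[R]_d.

Lemma dotvE u v : dotv u v = \sum_i u 0 i * v 0 i.
Proof. by rewrite /dotv mxE; apply: eq_bigr => i _; rewrite mxE. Qed.

Lemma dotvC u v : dotv u v = dotv v u.
Proof. by rewrite !dotvE; apply: eq_bigr => i _; rewrite mulrC. Qed.

Lemma dotvDl u v w : dotv (u + v) w = dotv u w + dotv v w.
Proof. by rewrite !dotvE -big_split; apply: eq_bigr => i _; rewrite mxE mulrDl. Qed.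

Lemma dotvZl a u w : dotv (a *: u) w = a * dotv u w.
Proof. by rewrite !dotvE mulr_sumr; apply: eq_bigr => i _; rewrite mxE mulrA. Qed.

Lemma dotv_suml (I : finType) (P : pred I) (F : I -> 'rV[R]_d) w :
  dotv (\sum_(i | P i) F i) w = \sum_(i | P i) dotv (F i) w.
Proof.
elim/big_rec2: _ => [|i x y _ <-]; last by rewrite dotvDl.
by rewrite dotvE big1 // => i _; rewrite mxE mul0r.
Qed.

Lemma dotv_sumr (I : finType) (P : pred I) (F : I -> 'rV[R]_d) w :
  dotv w (\sum_(i | P i) F i) = \sum_(i | P i) dotv w (F i).
Proof. by rewrite dotvC dotv_suml; apply: eq_bigr => i _; rewrite dotvC. Qed.

Lemma dotv_ge0 u : 0 <= dotv u u.
Proof. by rewrite dotvE sumr_ge0 // => i _; rewrite -expr2 sqr_ge0. Qed.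

Lemma dotv_eq0 u : (dotv u u == 0) = (u == 0).
Proof.
apply/idP/eqP => [|->]; last by rewrite dotvE big1 // => i _; rewrite mxE mul0r.
rewrite dotvE psumr_eq0 => [/allP u0|i _]; last by rewrite -expr2 sqr_ge0.
apply/rowP => j; have := u0 j (mem_index_enum j).
by rewrite mxE -expr2 sqrf_eq0 => /eqP.
Qed.

Lemma normv_sqr u : normv u ^+ 2 = dotv u u.
Proof. by rewrite /normv sqr_sqrtr // dotv_ge0. Qed.

Lemma normv_le_div_sqr a u v :
  0 < a -> normv u <= normv v / a -> a ^+ 2 * dotv u u <= dotv v v.
Proof.
move=> a0 uv; rewrite -!normv_sqr -exprMn ler_sqr ?nnegrE ?mulr_ge0 ?sqrtr_ge0 ?(ltW a0) //.
by rewrite mulrC -ler_pdivlMr.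
Qed.

End InnerProduct.

Section Gram.
Variable R : realType.

Definition gram m d (M : 'M[R]_(m, d)) : R := \det (M *m M^T).

Lemma detL_sqr m d (M : 'M[R]_(m, d)) : 0 <= gram M -> detL M ^+ 2 = gram M.
Proof. exact: sqr_sqrtr. Qed.

Lemma mulmx_tr_eq0 m d (M : 'M[R]_(m, d)) : (M *m M^T == 0) = (M == 0).
Proof.
apply/eqP/eqP => [MMt0|->]; last by rewrite mul0mx.
apply/row_matrixP => i; apply/eqP; rewrite row0 -dotv_eq0 dotvE.
have /matrixP/(_ i i) := MMt0; rewrite !mxE => MMt_ii.
by apply/eqP; rewrite -[RHS]MMt_ii; apply: eq_bigr => t _; rewrite !mxE.
Qed.

Lemma mxrank_mul_tr m d (M : 'M[R]_(m, d)) : \rank (M *m M^T) = \rank M.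
Proof.
apply/eqP; rewrite eqn_leq mxrankM_maxl /=.
have kerM : (kermx (M *m M^T) <= kermx M)%MS.
  apply/sub_kermxP/eqP; rewrite -mulmx_tr_eq0 trmx_mul mulmxA.
  by rewrite -[_ *m M *m M^T]mulmxA (sub_kermxP (submx_refl _)) mul0mx.
have := mxrankS kerM; rewrite !mxrank_ker.
have := rank_leq_row M; have := rank_leq_row (M *m M^T); lia.
Qed.

Lemma gram_neq0 m d (M : 'M[R]_(m, d)) : row_free M -> gram M != 0.
Proof.
rewrite /row_free -mxrank_mul_tr -/(row_free _) row_free_unit.
by rewrite unitmxE unitfE.
Qed.

Lemma exists_orth_proj m d (M : 'M[R]_(m, d)) (v : 'rV[R]_d) :
  exists c : 'rV[R]_m, (v - c *m M) *m M^T = 0.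
Proof.
have MMt_sub : (M *m M^T <= M^T)%MS by apply: submxMl.
have Mt_sub : (M^T <= M *m M^T)%MS.
  have := mxrank_leqif_sup MMt_sub; rewrite mxrank_mul_tr mxrank_tr.
  by move=> /leqifP; rewrite ltnn; case: ifP.
have /submxP [c vMt] : (v *m M^T <= M *m M^T)%MS.
  by apply: submx_trans Mt_sub; apply: submxMl.
by exists c; rewrite mulmxBl vMt mulmxA subrr.
Qed.

Lemma gram_mul m d (U : 'M[R]_m) (M : 'M[R]_(m, d)) :
  gram (U *m M) = \det U ^+ 2 * gram M.
Proof. by rewrite /gram trmx_mul !mulmxA !det_mulmx -!mulmxA det_mulmx det_tr; ring. Qed.

Lemma gram_col_mx_orth m d (w : 'rV[R]_d) (M : 'M[R]_(m, d)) :
  w *m M^T = 0 -> gram (col_mx w M) = dotv w w * gram M.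
Proof.
move=> wM0; rewrite /gram tr_col_mx mul_col_row.
have Mw0 : M *m w^T = 0 by rewrite -(trmxK (M *m w^T)) trmx_mul trmxK wM0 trmx0.
by rewrite wM0 Mw0 det_ublock det_mx11.
Qed.

Lemma gram_col_mx m d (v : 'rV[R]_d) (M : 'M[R]_(m, d)) (c : 'rV[R]_m) :
  (v - c *m M) *m M^T = 0 ->
  gram (col_mx v M) = dotv (v - c *m M) (v - c *m M) * gram M.
Proof.
move=> orth; rewrite -gram_col_mx_orth //.
have -> : col_mx (v - c *m M) M = block_mx 1%:M (- c) 0 1%:M *m col_mx v M.
  by rewrite mul_block_col !mul1mx mul0mx add0r mulNmx.
by rewrite gram_mul det_ublock !det1 mulr1 expr1n mul1r.
Qed.

Lemma gram_col_mx_eq0 m d (v : 'rV[R]_d) (M : 'M[R]_(m, d)) :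
  gram M = 0 -> gram (col_mx v M) = 0.
Proof. by have [c orth] := exists_orth_proj M v; rewrite (gram_col_mx orth) => ->; rewrite mulr0. Qed.

Lemma gram_ge0 m d (M : 'M[R]_(m, d)) : 0 <= gram M.
Proof.
elim: m M => [|m IH] M; first by rewrite /gram det_mx00.
have [c orth] := exists_orth_proj (dsubmx (M : 'M_(1 + m, d))) (usubmx (M : 'M_(1 + m, d))).
rewrite -[M](vsubmxK (M : 'M_(1 + m, d))) (gram_col_mx orth).
by rewrite mulr_ge0 // dotv_ge0.
Qed.

End Gram.

Section GramSchmidt.
Variables (R : realType) (n d : nat) (B : 'M[R]_(n, d)).
Local Notation w j := (dotv (gso B j) (gso B j)).

Lemma gsoP (i : 'I_n) :
  (exists c : 'I_n -> R, row i B - gso B i = \sum_(j < n | (j < i)%N) c j *: row j B)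
  /\ (forall j : 'I_n, (j < i)%N -> dotv (gso B i) (row j B) = 0).
Proof.
pose Bi : 'M[R]_(n, d) := \matrix_(j, t) (if (j < i)%N then B j t else 0).
have [c orth] := exists_orth_proj Bi (row i B).
rewrite /gso; case: classical_sets.xgetP => [//|noGS]; exfalso; apply: (noGS (row i B - c *m Bi)).
split.
  exists (c 0); rewrite opprB addrC subrK mulmx_sum_row [RHS]big_mkcond.
  apply: eq_bigr => j _ /=; case: ifP => ji; last first.
    by apply/rowP => t; rewrite !mxE ji mulr0.
  by congr (_ *: _); apply/rowP => t; rewrite !mxE ji.
move=> j ji; have /matrixP/(_ 0 j) := orth; rewrite !mxE dotvE => orth_j.
by rewrite -[RHS]orth_j; apply: eq_bigr => t _; rewrite !mxE ji.
Qed.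

Lemma sum_ord_last_support (V : zmodType) (F : 'I_n -> V) (J : 'I_n) :
  (forall j : 'I_n, (J < j)%N -> F j = 0) ->
  \sum_j F j = \sum_(j : 'I_n | (j < J)%N) F j + F J.
Proof.
move=> F0; rewrite (bigD1 J) //= addrC; congr (_ + _).
rewrite big_mkcond [RHS]big_mkcond; apply: eq_bigr => j _.
case: (ltngtP j J) => [jJ|Jj|/val_inj ->]; last by rewrite eqxx.
- by case: eqP => // jJ'; rewrite jJ' ltnn in jJ.
- by rewrite F0 // if_same.
Qed.

(* y B = y_J b~_J + (a combination of the b_j, j < J), and b~_J is orthogonal
   to every such combination. *)
Lemma gso_coef_le (y : 'rV[R]_n) (J : 'I_n) :
  (forall j : 'I_n, (J < j)%N -> y 0 j = 0) ->
  y 0 J ^+ 2 * w J <= dotv (y *m B) (y *m B).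
Proof.
move=> y0; have [[c bJ] orth] := gsoP J; set g := gso B J in bJ orth *.
set u := \sum_(j < n | (j < J)%N) (y 0 j + y 0 J * c j) *: row j B.
have yB : y *m B = y 0 J *: g + u.
  rewrite mulmx_sum_row (@sum_ord_last_support _ _ J); last first.
    by move=> j Jj; rewrite y0 // scale0r.
  have -> : u = \sum_(j < n | (j < J)%N) y 0 j *: row j B + y 0 J *: (row J B - g).
    rewrite bJ /u scaler_sumr -big_split /=; apply: eq_bigr => j _.
    by rewrite scalerDl scalerA.
  by rewrite scalerBr addrA addrC addrA addrNK addrC.
have gu : dotv g u = 0.
  by rewrite dotv_sumr big1 // => j jJ; rewrite dotvC dotvZl dotvC orth // mulr0.
rewrite yB !dotvDl !dotvZl ![dotv _ (_ + _)]dotvC !dotvDl !dotvZl.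
rewrite gu [dotv u g]dotvC gu !mulr0 !addr0 mulrA -expr2.
by rewrite add0r lerDl dotv_ge0.
Qed.

Lemma gram_col_mx_ge m (y : 'rV[R]_n) (Z : 'M[R]_(m, n)) (J : 'I_n) :
  (forall j : 'I_n, (J < j)%N -> y 0 j = 0) ->
  (forall r (j : 'I_n), (J <= j)%N -> Z r j = 0) ->
  y 0 J ^+ 2 * w J * gram (Z *m B) <= gram (col_mx (y *m B) (Z *m B)).
Proof.
move=> y0 Z0; have [c orth] := exists_orth_proj (Z *m B) (y *m B).
rewrite (gram_col_mx orth) mulmxA -mulmxBl.
have yc (j : 'I_n) : (J <= j)%N -> (y - c *m Z) 0 j = y 0 j.
  by move=> Jj; rewrite !mxE big1 ?subr0 // => r _; rewrite Z0 // mulr0.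
rewrite -yc // ler_wpM2r ?gram_ge0 // gso_coef_le // => j Jj.
by rewrite yc ?y0 // ltnW.
Qed.

End GramSchmidt.

Lemma prod_exchange_gap (R : realFieldType) (I : finType) (w : I -> R) (a : R)
    (S K : {set I}) :
  1 <= a -> (forall i, 0 <= w i) -> #|S| = #|K| -> ~~ (S \subset K) ->
  (forall i j, i \in K -> j \in S :\: K -> a * w i <= w j) ->
  a * \prod_(i in K) w i <= \prod_(i in S) w i.
Proof.
move=> a1 w0 SK notSK gap.
rewrite (big_setID S) [X in _ <= X](big_setID K) /= setIC mulrCA.
apply: ler_wpM2l; first by apply: prodr_ge0.
set s := #|S :\: K|.
have KS : #|K :\: S| = s by have := cardsID S K; have := cardsID K S; rewrite SK setIC; lia.
have s0 : (0 < s)%N by rewrite card_gt0 setD_eq0.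
have a0 : 0 < a by apply: lt_le_trans a1.
pose A := \big[Num.max/0]_(i in K :\: S) w i.
have A0 : 0 <= A by elim/big_rec: A => // i x _ x0; rewrite le_max x0 orbT.
have wA i : i \in K :\: S -> w i <= A by move=> iKS; apply: le_bigmax_cond.
have aA j : j \in S :\: K -> a * A <= w j.
  move=> jSK; rewrite mulrC -ler_pdivlMr //.
  apply: bigmax_le => [|i /setDP [iK _]]; first by rewrite divr_ge0 // ltW.
  by rewrite ler_pdivlMr // mulrC gap.
apply: (@le_trans _ _ (a * A ^+ s)).
  rewrite -KS -prodr_const ler_wpM2l ?(ltW a0) //.
  by apply: ler_prod => i /wA ->; rewrite w0.
apply: (@le_trans _ _ ((a * A) ^+ s)); last first.
  by rewrite -prodr_const; apply: ler_prod => j /aA ->; rewrite mulr_ge0 // ltW.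
rewrite exprMn ler_wpM2r ?exprn_ge0 // -(prednK s0) exprS.
by rewrite ler_peMr ?(ltW a0) // exprn_ege1.
Qed.

Lemma prod_inj_gap (R : realFieldType) n k (hkn : (k <= n)%N) (w : 'I_n -> R)
    (a : R) (p : 'I_k -> 'I_n) :
  1 <= a -> (forall i, 0 <= w i) -> injective p -> (exists r, (k <= p r)%N) ->
  (forall i j : 'I_n, (i < k)%N -> (k <= j)%N -> a * w i <= w j) ->
  a * \prod_(i < n | (i < k)%N) w i <= \prod_r w (p r).
Proof.
move=> a1 w0 pinj [r0 kp] gap.
have head_inj : injective (widen_ord hkn) by move=> x y /(congr1 val) /= xy; apply: val_inj.
have mem_head (j : 'I_n) : (j \in widen_ord hkn @: [set: 'I_k]) = (j < k)%N.
  apply/imsetP/idP => [[i _ ->]|jk]; first exact: (ltn_ord i).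
  by exists (Ordinal jk); rewrite ?inE //; apply: val_inj.
have prod_image (f : 'I_k -> 'I_n) :
    injective f -> \prod_(j in f @: [set: 'I_k]) w j = \prod_r w (f r).
  move=> finj; rewrite big_imset /=; last by move=> x y _ _; apply: finj.
  by apply: eq_bigl => r; rewrite in_setT.
rewrite big_ord_narrow -!prod_image //; apply: prod_exchange_gap => //.
- by rewrite !card_imset.
- apply/subsetPn; exists (p r0); first by apply: imset_f.
  by rewrite mem_head -leqNgt.
- move=> i j; rewrite mem_head => ik /setDP [_].
  by rewrite mem_head -leqNgt; apply: gap.
Qed.

Lemma unitmx_mul_eq0 (R : comUnitRingType) m p (U : 'M[R]_m) (M : 'M[R]_(m, p)) :
  U \in unitmx -> (U *m M == 0) = (M == 0).
Proof.
move=> uU; apply/eqP/eqP => [UM0|->]; last by rewrite mulmx0.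
by rewrite -(mulKmx uU M) UM0 mulmx0.
Qed.

Lemma sqr_det_unitmx_int m (U : 'M[int]_m) : U \in unitmx -> \det U ^+ 2 = 1.
Proof.
have unitzE (x : int) : (x \is a GRing.unit) = (x == 1) || (x == -1) by [].
by rewrite unitmxE unitzE => /orP [] /eqP ->.
Qed.

Lemma unimodular_col_pivot m p (Z : 'M[int]_(m.+1, p)) (J : 'I_p) :
  exists2 U : 'M[int]_m.+1, U \in unitmx &
    forall r : 'I_m.+1, r != ord0 -> (U *m Z) r J = 0.
Proof.
have [L uL [R _ [dd _ ZJE]]] := int_Smith_normal_form (col J Z).
exists (invmx L); first by rewrite unitmx_inv.
move=> r r0; have -> : (invmx L *m Z) r J = col J (invmx L *m Z) r 0 by rewrite [RHS]mxE.
rewrite colE -mulmxA -colE ZJE -!mulmxA mulKmx // mxE big_ord1 mxE.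
suff /negbTE -> : (r : nat) != 0%N by rewrite mulr0n mul0r.
by apply: contra r0 => /eqP r0; apply/eqP/val_inj.
Qed.

Lemma exists_last_nonzero_col (V : zmodType) m p (A : 'M[V]_(m, p)) :
  A != 0 -> exists J : 'I_p, col J A != 0 /\ forall j : 'I_p, (J < j)%N -> col j A = 0.
Proof.
move=> A0; have [j0 Aj0] : exists j, col j A != 0.
  apply/existsP; apply: contraNT A0 => /existsPn A0.
  by apply/eqP/matrixP => i j; have /negPn/eqP/colP/(_ i) := A0 j; rewrite !mxE.
have [J AJ Jmax] := @arg_maxnP _ j0 (fun j => col j A != 0) val Aj0.
exists J; split=> // j Jj; apply/eqP; apply: contraTT Jj => Aj.
by rewrite -leqNgt; apply: Jmax.
Qed.

Lemma unimodular_pivot_form m p (Z : 'M[int]_(m.+1, p)) : Z != 0 ->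
  exists J : 'I_p, exists2 U : 'M[int]_m.+1, U \in unitmx &
    [/\ (U *m Z) ord0 J != 0, forall r, r != ord0 -> (U *m Z) r J = 0
       & forall j : 'I_p, (J < j)%N -> col j Z = 0].
Proof.
move=> Z0; have [J [ZJ Zhi]] := exists_last_nonzero_col Z0.
have [U uU UZJ] := unimodular_col_pivot Z J; exists J, U => //; split=> //.
apply: contra ZJ => /eqP UZ0J; rewrite -(unitmx_mul_eq0 _ uU) colE mulmxA -colE.
by apply/eqP/colP => r; rewrite [LHS]mxE [RHS]mxE; case: (eqVneq r ord0) => [->|/UZJ].
Qed.

Lemma exists_inj_cons m p (J : 'I_p) (f : 'I_m -> 'I_p) :
  injective f -> (forall r, f r != J) ->
  exists g : 'I_m.+1 -> 'I_p, [/\ injective g, g ord0 = J & forall r, g (lift ord0 r) = f r].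
Proof.
move=> finj fJ; exists (fun r => if unlift ord0 r is Some r' then f r' else J).
split=> [r1 r2||r]; rewrite ?unlift_none ?liftK //.
case: unliftP => [r1' ->|->]; case: unliftP => [r2' ->|->] //.
- by move/finj ->.
- by move/eqP; rewrite (negbTE (fJ r1')).
- by move/esym/eqP; rewrite (negbTE (fJ r2')).
Qed.

Section Echelon.
Variables (R : realType) (n d : nat) (B : 'M[R]_(n, d)).
Local Notation w j := (dotv (gso B j) (gso B j)).
Local Notation mz Z := (map_mx (intr : int -> R) Z).

Lemma gram_unitmx_int m (U : 'M[int]_m) (Z : 'M[int]_(m, n)) :
  U \in unitmx -> gram (mz (U *m Z) *m B) = gram (mz Z *m B).
Proof.
move=> uU; rewrite map_mxM -mulmxA gram_mul det_map_mx -rmorphXn.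
by rewrite sqr_det_unitmx_int // rmorph1 mul1r.
Qed.

Lemma gram_pivot_row_ge m (y : 'rV[int]_n) (Z : 'M[int]_(m, n)) (J : 'I_n) :
  y 0 J != 0 -> (forall j : 'I_n, (J < j)%N -> y 0 j = 0) ->
  (forall r (j : 'I_n), (J <= j)%N -> Z r j = 0) ->
  w J * gram (mz Z *m B) <= gram (mz (col_mx y Z) *m B).
Proof.
move=> yJ yhi Zhi; rewrite map_col_mx mul_col_mx.
apply: le_trans _ (gram_col_mx_ge B (J := J) _ _); last first.
- by move=> r j Jj; rewrite mxE Zhi.
- by move=> j Jj; rewrite mxE yhi.
rewrite ler_wpM2r ?gram_ge0 // ler_peMl ?dotv_ge0 // mxE.
by rewrite -rmorphXn /= -(rmorph1 (intr : int -> R)) ler_int; move: yJ; set z := y 0 J; lia.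
Qed.

(* Induction on the number of rows: a unimodular transformation clears the
   last nonzero column J below the first row, which then contributes at least
   |b~_J|^2 to the Gram determinant, while the other rows live in the columns
   before J. *)
Lemma exists_echelon_pivots m (Z : 'M[int]_(m, n)) : gram (mz Z *m B) != 0 ->
  exists p : 'I_m -> 'I_n, [/\ injective p,
    \prod_r w (p r) <= gram (mz Z *m B),
    forall r, col (p r) Z != 0 &
    forall j, col j Z != 0 -> exists r, (j <= p r)%N].
Proof.
elim: m Z => [|m IH] Z gZ.
  have p : 'I_0 -> 'I_n by case.
  exists p; split=> [[]||[]|j] //; first by rewrite big_ord0 /gram det_mx00.
  by rewrite [col j Z]flatmx0 eqxx.
have Z0 : Z != 0 by apply: contra gZ => /eqP ->; rewrite map_mx0 mul0mx /gram mul0mx det0.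
have [J [U uU [Z'0J Z'J Zhi]]] := unimodular_pivot_form Z0.
have colZ' j : (col j (U *m Z) == 0) = (col j Z == 0).
  by rewrite colE -mulmxA -colE unitmx_mul_eq0.
rewrite -(gram_unitmx_int Z uU) in gZ *; move: (U *m Z) colZ' Z'0J Z'J gZ => Z' colZ' Z'0J Z'J gZ.
have Z'hi r (j : 'I_n) : (J < j)%N -> Z' r j = 0.
  by move=> Jj; move/eqP: (Zhi j Jj); rewrite -colZ' => /eqP/colP/(_ r); rewrite !mxE.
pose y := usubmx (Z' : 'M_(1 + m, n)); pose Z1 := dsubmx (Z' : 'M_(1 + m, n)).
have Z'E : Z' = col_mx y Z1 by rewrite /y /Z1 vsubmxK.
have Z1E r j : Z1 r j = Z' (lift ord0 r) j by rewrite mxE; congr (Z' _ j); apply: val_inj.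
have yE j : y 0 j = Z' ord0 j by rewrite mxE; congr (Z' _ j); apply: val_inj.
have Z1hi r (j : 'I_n) : (J <= j)%N -> Z1 r j = 0.
  by rewrite Z1E leq_eqVlt => /orP [/eqP/val_inj <-|/Z'hi //]; apply: Z'J; rewrite eq_sym neq_lift.
have gZ1 : gram (mz Z1 *m B) != 0.
  have Z'BE : mz Z' *m B = col_mx (mz y *m B) (mz Z1 *m B).
    by rewrite Z'E; exact: etrans (congr1 (mulmx^~ B) (map_col_mx _ y Z1)) (mul_col_mx _ _ _).
  by apply: contra gZ; rewrite Z'BE => /eqP/gram_col_mx_eq0 ->.
have [p1 [p1inj p1gram p1col p1max]] := IH Z1 gZ1.
have p1J r : p1 r != J.
  apply: contraNneq (p1col r) => ->; apply/eqP/colP => r'.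
  by rewrite [LHS]mxE Z1hi // mxE.
have [p [pinj p0 pS]] := exists_inj_cons p1inj p1J.
exists p; split=> //.
- rewrite big_ord_recl p0; under eq_bigr do rewrite pS.
  rewrite Z'E; apply: le_trans (ler_wpM2l (dotv_ge0 _) p1gram) (gram_pivot_row_ge _ _ _).
  + by rewrite yE.
  + by move=> j Jj; rewrite yE Z'hi.
  + exact: Z1hi.
- move=> r; case: (unliftP ord0 r) => [r' ->|->]; rewrite ?p0 ?pS; last first.
    by rewrite -colZ'; apply: contra Z'0J => /eqP/colP/(_ ord0); rewrite !mxE => ->.
  move: (p1col r'); apply: contra; rewrite -colZ' => /eqP/colP Z'p1.
  by apply/eqP/colP => r''; rewrite [LHS]mxE Z1E; have := Z'p1 (lift ord0 r''); rewrite !mxE.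
- move=> j Zj; exists ord0; rewrite p0 leqNgt; apply: contra Zj => Jj.
  by rewrite Zhi.
Qed.

Lemma mulmx_head_sub k (hkn : (k <= n)%N) (v : 'rV[R]_n) :
  (forall j : 'I_n, (k <= j)%N -> v 0 j = 0) ->
  (v *m B <= rowsub (widen_ord hkn) B)%MS.
Proof.
move=> v0; suff -> : v *m B = \row_i v 0 (widen_ord hkn i) *m rowsub (widen_ord hkn) B.
  exact: submxMl.
rewrite !mulmx_sum_row (bigID (fun j : 'I_n => (j < k)%N)) /= [X in _ + X]big1 ?addr0.
  by rewrite big_ord_narrow; apply: eq_bigr => i _; rewrite row_rowsub mxE.
by move=> j; rewrite -leqNgt => /v0 ->; rewrite scale0r.
Qed.

Lemma small_sublattice_spans_head k (hkn : (k <= n)%N) (a : R) :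
  1 <= a -> (forall i j : 'I_n, (i < k)%N -> (k <= j)%N -> a * w i <= w j) ->
  forall M : 'M[R]_(k, d), row_free M -> (forall r, lat B (row r M)) ->
  gram M < a * \prod_(i < n | (i < k)%N) w i ->
  (rowsub (widen_ord hkn) B <= M)%MS.
Proof.
move=> a1 gap M Mfree Mlat Msmall; have [z zE] := fin_all_exists Mlat.
pose Z : 'M[int]_(k, n) := \matrix_(r, j) z r j.
have ME : M = mz Z *m B.
  apply/row_matrixP => r; rewrite row_mul mulmx_sum_row zE.
  by apply: eq_bigr => j _; rewrite !mxE.
have gZ : gram (mz Z *m B) != 0 by rewrite -ME gram_neq0.
have [p [pinj pgram _ pmax]] := exists_echelon_pivots gZ.
have Zhi r (j : 'I_n) : (k <= j)%N -> Z r j = 0.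
  move=> kj; apply: contraTeq Msmall => Zrj; rewrite -leNgt ME.
  have [r' jp] : exists r', (j <= p r')%N.
    by apply: pmax; apply: contra_neq Zrj => /colP/(_ r); rewrite !mxE.
  apply: le_trans pgram; apply: prod_inj_gap => //; first by move=> i; apply: dotv_ge0.
  by exists r'; apply: leq_trans jp.
have MB : (M <= rowsub (widen_ord hkn) B)%MS.
  apply/row_subP => r; rewrite ME row_mul; apply: mulmx_head_sub => j kj.
  by have := Zhi r j kj; rewrite !mxE => ->.
have [_ <-] := mxrank_leqif_sup MB.
by rewrite eqn_leq (mxrankS MB) /= (eqP Mfree) rank_leq_row.
Qed.

End Echelon.

Section Sublattices.
Import classical_sets.
Variable R : realType.

Lemma lat_row n d (B : 'M[R]_(n, d)) (i : 'I_n) : lat B (row i B).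
Proof.
exists (fun j => (j == i)%:Z); rewrite (bigD1 i) //= eqxx scale1r big1 ?addr0 //.
by move=> j /negbTE ->; rewrite scale0r.
Qed.

Lemma lat_trans n l d (B : 'M[R]_(n, d)) (C : 'M[R]_(l, d)) (v : 'rV[R]_d) :
  (forall r, lat B (row r C)) -> lat C v -> lat B v.
Proof.
move=> Clat [z ->]; have [zC zCE] := fin_all_exists Clat.
exists (fun j => \sum_r z r * zC r j); under eq_bigr do rewrite zCE scaler_sumr.
rewrite exchange_big /=; apply: eq_bigr => j _.
by rewrite rmorph_sum scaler_suml; apply: eq_bigr => r _; rewrite scalerA rmorphM.
Qed.

Lemma rspan_submx l k d (C : 'M[R]_(l, d)) (M : 'M[R]_(k, d)) (v : 'rV[R]_d) :
  (forall r, lat C (row r M)) -> (v <= M)%MS -> rspan C v.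
Proof.
move=> Mlat /submxP [u ->]; have [z zE] := fin_all_exists Mlat.
pose Z : 'M[R]_(k, l) := \matrix_(r, j) (z r j)%:~R.
exists (fun j => (u *m Z) 0 j); rewrite -mulmx_sum_row -mulmxA; congr (u *m _).
apply/row_matrixP => r; rewrite row_mul mulmx_sum_row zE.
by apply: eq_bigr => j _; rewrite !mxE.
Qed.

Lemma row_free_rowsub m p n (f : 'I_p -> 'I_m) (C : 'M[R]_(m, n)) :
  injective f -> row_free C -> row_free (rowsub f C).
Proof.
move=> finj Cfree; rewrite rowsubE /row_free mxrankMfree // -/(row_free _).
apply/row_freeP; exists (rowsub f 1%:M)^T; apply/matrixP => a b.
rewrite !mxE (bigD1 (f a)) //= big1 => [|j ja]; last first.
  by rewrite !mxE eq_sym (negbTE ja) mul0r.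
by rewrite /mxsub !mxE eqxx mul1r addr0 (inj_eq finj) eq_sym.
Qed.

Lemma rankin_short_sublattice l k d (C : 'M[R]_(l, d)) (t : R) :
  (k <= l)%N -> row_free C -> 0 < rankin R l k < t ->
  exists2 M : 'M[R]_(k, d), row_free M /\ (forall r, lat C (row r M)) &
    gram M < t * powR (detL C) (2 * k%:R / l%:R).
Proof.
move=> kl Cfree /andP [rk0 rkt]; move: rk0 rkt; rewrite /rankin.
set Out := (X in sup X); set e := (2 * k%:R / l%:R); move=> rk0 rkt.
pose X := [set y : R | exists M : 'M[R]_(k, d), row_free M /\
  (forall r, lat C (row r M)) /\ y = detL M ^+ 2 / powR (detL C) e]%classic.
have supOut : has_sup Out.
  by apply: contrapT => noSup; move: rk0; rewrite sup_out // ltxx.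
have infX : inf X < t by apply: le_lt_trans (sup_upper_bound supOut _) rkt; exists d, C.
have X0 : (X !=set0)%classic.
  have kl_inj : injective (widen_ord kl) by move=> x y /(congr1 val) /= xy; apply: val_inj.
  exists (detL (rowsub (widen_ord kl) C) ^+ 2 / powR (detL C) e), (rowsub (widen_ord kl) C).
  split; first exact: row_free_rowsub.
  by split=> // r; rewrite row_rowsub; apply: lat_row.
have [_ [M [Mfree [Mlat ->]]] Mt] := inf_lt X0 infX.
exists M => //; move: Mt; rewrite detL_sqr ?gram_ge0 // ltr_pdivrMr // powR_gt0 //.
by rewrite /detL sqrtr_gt0 lt0r gram_neq0 ?gram_ge0.
Qed.

End Sublattices.

Lemma powR_lt_sqr (R : realType) (x b p e : R) :
  0 <= x -> 0 <= b -> 0 < e -> p * e = 2 -> x < powR b p -> powR x e < b ^+ 2.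
Proof.
move=> x0 b0 e0 pe xb; rewrite -powR_mulrn // -pe powRrM.
by apply: gt0_ltr_powR; rewrite ?nnegrE ?powR_ge0.
Qed.

Lemma powR_covolume_bound (R : realType) (D a P N delta x e : R) :
  0 < D -> 0 <= a -> 0 <= P -> 1 <= N -> 0 < e -> x * e = 2 ->
  D < powR (a / Num.sqrt (N * delta) * P) x ->
  0 < delta < a ^+ 2 * P ^+ 2 / powR D e.
Proof.
move=> D0 a0 P0 N1 e0 xe Dlt; have N0 : 0 < N := lt_le_trans ltr01 N1.
have delta0 : 0 < delta.
  rewrite ltNge; apply/negP => delta0; move: Dlt.
  rewrite ler0_sqrtr ?pmulr_rle0 // invr0 mulr0 mul0r powR0 ?ltNge ?(ltW D0) //.
  by apply/eqP => x0; move: xe; rewrite x0 mul0r => /eqP; rewrite eq_sym pnatr_eq0.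
have Nd0 : 0 < N * delta by rewrite mulr_gt0.
rewrite delta0 /= ltr_pdivlMr ?powR_gt0 //.
apply: (@le_lt_trans _ _ (powR D e * (N * delta))).
  by rewrite mulrC ler_pM2l ?powR_gt0 // ler_peMl // ltW.
rewrite -ltr_pdivlMr //.
have -> : a ^+ 2 * P ^+ 2 / (N * delta) = (a / Num.sqrt (N * delta) * P) ^+ 2.
  by rewrite !exprMn exprVn sqr_sqrtr ?ltW // mulrAC.
by apply: powR_lt_sqr Dlt; rewrite ?(ltW D0) // mulr_ge0 ?divr_ge0 ?sqrtr_ge0.
Qed.

Theorem mainTheorem16 (R : realType) (n d : nat) (B : 'M[R]_(n, d))
  (Brat : forall (i : 'I_n) (j : 'I_d), exists q : rat, B i j = ratr q)
  (Bfree : row_free B)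
  (k : nat) (hk1 : (1 <= k)%N) (hkn : (k <= n)%N)
  (alpha : R) (halpha : Num.sqrt n%:R < alpha)
  (hgap : forall i j : 'I_n, (i < k)%N -> (k <= j)%N ->
            normv (gso B i) <= normv (gso B j) / alpha)
  (l : nat) (C : 'M[R]_(l, d))
  (Cfree : row_free C)
  (Csub : forall i : 'I_l, lat B (row i C))
  (Cprim : forall v : 'rV[R]_d, lat B v -> rspan C v -> lat C v)
  (hkl : (k <= l)%N)
  (hdet : detL C < powR (alpha / Num.sqrt (n%:R * rankin R l k)
                          * \prod_(i < n | (i < k)%N) normv (gso B i))
                        (l%:R / k%:R)) :
  forall i : 'I_n, (i < k)%N -> lat C (row i B).
Proof.
move=> i ik; set P := \prod_(i < n | (i < k)%N) _ in hdet.
have l0 : (0 < l)%N := leq_trans hk1 hkl.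
have n1 : 1 <= n%:R :> R by rewrite ler1n (leq_trans hk1 hkn).
have alpha1 : 1 < alpha by apply: le_lt_trans halpha; rewrite -[leLHS]sqrtr1 ler_sqrt.
have alpha0 : 0 < alpha := lt_trans ltr01 alpha1.
have C0 : 0 < detL C by rewrite sqrtr_gt0 lt0r gram_neq0 ?gram_ge0.
have P0 : 0 <= P by apply: prodr_ge0 => j _; apply: sqrtr_ge0.
have e0 : 0 < 2 * k%:R / l%:R :> R by rewrite !mulr_gt0 ?invr_gt0 ?ltr0n.
have lk_e : l%:R / k%:R * (2 * k%:R / l%:R) = 2 :> R.
  by rewrite mulrC mulrA divfK ?mulfK // pnatr_eq0 -lt0n.
have [M [Mfree Mlat] Msmall] := rankin_short_sublattice hkl Cfree
  (powR_covolume_bound C0 (ltW alpha0) P0 n1 e0 lk_e hdet).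
rewrite divfK ?gt_eqF ?powR_gt0 // -prodrXl in Msmall.
have gap i' j i'k kj := normv_le_div_sqr alpha0 (hgap i' j i'k kj).
have headM : (rowsub (widen_ord hkn) B <= M)%MS.
  apply: (small_sublattice_spans_head hkn (exprn_ege1 2 (ltW alpha1)) gap Mfree).
  - by move=> r; exact: lat_trans Csub (Mlat r).
  - by under eq_bigr do rewrite -normv_sqr.
apply: Cprim (lat_row B i) (rspan_submx Mlat (submx_trans _ headM)).
have -> : row i B = row (Ordinal ik) (rowsub (widen_ord hkn) B).
  by rewrite row_rowsub; congr row; apply: val_inj.
exact: row_sub.
Qed.
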